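(* Let $X$ and $Y$ be Hausdorff spaces such that $X\times Y$ is normal. Then $(C(X,Y),\tau_\Gamma)$ is a regular space.
   Context: For topological spaces $X,Y$, $C(X,Y)$ denotes the set of continuous maps $X\to Y$; each $f\in C(X,Y)$ is identified with its graph $\{(x,f(x)):x\in X\}\subset X\times Y$. For $G$ open in $X\times Y$ let $F_G=\{f\in C(X,Y): f\subset G\}$. The graph topology $\tau_\Gamma$ on $C(X,Y)$ is the topology having the sets $F_G$ ($G$ open in $X\times Y$) as a base. *)

From Stdlib Require Import Classical.



Record topology (X : Type) := Topology {
  is_open : (X -> Prop) -> Prop;
  open_full : is_open (fun _ => True);
  open_inter : forall U V, is_open U -> is_open V -> is_open (fun x => U x /\ V x);
  open_union : forall (F : (X -> Prop) -> Prop),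
      (forall U, F U -> is_open U) -> is_open (fun x => exists U, F U /\ U x)
}.
Arguments is_open {X} t _.

Definition is_closed {X} (T : topology X) (A : X -> Prop) : Prop :=
  is_open T (fun x => ~ A x).

Definition continuous {X Y} (TX : topology X) (TY : topology Y) (f : X -> Y) : Prop :=
  forall V, is_open TY V -> is_open TX (fun x => V (f x)).

(* separation axioms (Engelking's conventions: regular and normal include T1) *)
Definition T1_space {X} (T : topology X) : Prop :=
  forall x y : X, x <> y -> exists U, is_open T U /\ U x /\ ~ U y.

Definition hausdorff {X} (T : topology X) : Prop :=
  forall x y : X, x <> y -> exists U V, is_open T U /\ is_open T V /\ U x /\ V y /\
    (forall z, U z -> V z -> False).

Definition regular_space {X} (T : topology X) : Prop :=
  T1_space T /\
  forall (A : X -> Prop) (x : X), is_closed T A -> ~ A x ->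
    exists U V, is_open T U /\ is_open T V /\ U x /\ (forall a, A a -> V a) /\
      (forall z, U z -> V z -> False).

Definition normal_space {X} (T : topology X) : Prop :=
  T1_space T /\
  forall (A B : X -> Prop), is_closed T A -> is_closed T B ->
    (forall z, A z -> B z -> False) ->
    exists U V, is_open T U /\ is_open T V /\ (forall a, A a -> U a) /\
      (forall b, B b -> V b) /\ (forall z, U z -> V z -> False).

Definition prod_open {X Y} (TX : topology X) (TY : topology Y) (W : X * Y -> Prop) : Prop :=
  forall p, W p -> exists U V, is_open TX U /\ is_open TY V /\ U (fst p) /\ V (snd p) /\
    (forall x y, U x -> V y -> W (x, y)).

Lemma prod_open_full {X Y} (TX : topology X) (TY : topology Y) :
  prod_open TX TY (fun _ => True).
Proof.
  intros p _. exists (fun _ => True), (fun _ => True).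
  repeat split; try apply open_full; auto.
Qed.

Lemma prod_open_inter {X Y} (TX : topology X) (TY : topology Y) U V :
  prod_open TX TY U -> prod_open TX TY V -> prod_open TX TY (fun p => U p /\ V p).
Proof.
  intros HU HV p [Up Vp].
  destruct (HU p Up) as [A1 [B1 [HA1 [HB1 [HA1p [HB1p H1]]]]]].
  destruct (HV p Vp) as [A2 [B2 [HA2 [HB2 [HA2p [HB2p H2]]]]]].
  exists (fun x => A1 x /\ A2 x), (fun y => B1 y /\ B2 y).
  repeat split; try apply open_inter; auto; firstorder.
Qed.

Lemma prod_open_union {X Y} (TX : topology X) (TY : topology Y)
  (F : (X * Y -> Prop) -> Prop) :
  (forall U, F U -> prod_open TX TY U) -> prod_open TX TY (fun p => exists U, F U /\ U p).
Proof.
  intros HF p [U [FU Up]].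
  destruct (HF U FU p Up) as [A [B [HA [HB [HAp [HBp H]]]]]].
  exists A, B. repeat split; auto. intros x y Ax By. exists U; auto.
Qed.

Definition prod_topology {X Y} (TX : topology X) (TY : topology Y) : topology (X * Y) :=
  @Topology (X * Y) (prod_open TX TY) (prod_open_full TX TY)
    (@prod_open_inter X Y TX TY) (@prod_open_union X Y TX TY).

Definition Cmap {X Y} (TX : topology X) (TY : topology Y) : Type :=
  { f : X -> Y | continuous TX TY f }.

(* f ⊂ G : the graph of f lies in G *)
Definition graph_in {X Y} (f : X -> Y) (G : X * Y -> Prop) : Prop :=
  forall x, G (x, f x).

Definition F_G {X Y} (TX : topology X) (TY : topology Y) (G : X * Y -> Prop)
  : Cmap TX TY -> Prop :=
  fun f => graph_in (proj1_sig f) G.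

Definition graph_open {X Y} (TX : topology X) (TY : topology Y) (S : Cmap TX TY -> Prop) : Prop :=
  forall f, S f -> exists G, is_open (prod_topology TX TY) G /\ F_G TX TY G f /\
    (forall g, F_G TX TY G g -> S g).

Lemma graph_open_full {X Y} (TX : topology X) (TY : topology Y) :
  graph_open TX TY (fun _ => True).
Proof.
  intros f _. exists (fun _ => True). split; [apply open_full|]. split; [intros x; exact I|auto].
Qed.

Lemma graph_open_inter {X Y} (TX : topology X) (TY : topology Y) U V :
  graph_open TX TY U -> graph_open TX TY V -> graph_open TX TY (fun f => U f /\ V f).
Proof.
  intros HU HV f [Uf Vf].
  destruct (HU f Uf) as [G1 [HG1 [F1 S1]]].
  destruct (HV f Vf) as [G2 [HG2 [F2 S2]]].
  exists (fun p => G1 p /\ G2 p). split; [apply open_inter; auto|].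
  split; [intros x; split; [apply F1|apply F2]|].
  intros g Hg. split; [apply S1|apply S2]; intros x; apply (Hg x).
Qed.

Lemma graph_open_union {X Y} (TX : topology X) (TY : topology Y)
  (F : (Cmap TX TY -> Prop) -> Prop) :
  (forall U, F U -> graph_open TX TY U) -> graph_open TX TY (fun f => exists U, F U /\ U f).
Proof.
  intros HF f [U [FU Uf]].
  destruct (HF U FU f Uf) as [G [HG [Ff S]]].
  exists G. repeat split; auto. intros g Hg. exists U; auto.
Qed.

Definition graph_topology {X Y} (TX : topology X) (TY : topology Y) : topology (Cmap TX TY) :=
  @Topology (Cmap TX TY) (graph_open TX TY) (graph_open_full TX TY)
    (@graph_open_inter X Y TX TY) (@graph_open_union X Y TX TY).

From Stdlib Require Import Classical FunctionalExtensionality PropExtensionality ProofIrrelevance.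

(* T1: two distinct maps f, g differ at some point x0; the complement W of the
   single point (x0, g x0) is open in X*Y (both factors are T1), f lies in the
   basic open set F_W, and g does not.

   Separation: if f is outside a closed set A, then some basic neighbourhood F_G
   of f misses A.  The graph of f is closed in X*Y (Y is Hausdorff) and disjoint
   from the closed set (X*Y) \ G, so normality yields disjoint open U, V with
   graph f in U and (X*Y) \ G in V.  Then F_U is an open neighbourhood of f, and
   the set of maps whose graph meets V is open (X is T1) and contains every map
   outside F_G, in particular all of A; the two sets are disjoint since U and V are. *)

Lemma open_ext {X} (T : topology X) (U V : X -> Prop) :
  is_open T U -> (forall x, U x <-> V x) -> is_open T V.
Proof.
  intros HU E. replace V with U; auto.
  apply functional_extensionality; intros x; apply propositional_extensionality; auto.
Qed.

Lemma complement_open_closed {X} (T : topology X) (U : X -> Prop) :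
  is_open T U -> is_closed T (fun x => ~ U x).
Proof.
  intros HU. apply (open_ext T U); auto.
  intros x; split; [tauto | apply NNPP].
Qed.

Lemma hausdorff_T1 {X} (T : topology X) : hausdorff T -> T1_space T.
Proof.
  intros H x y nxy. destruct (H x y nxy) as [U [V [HU [HV [Ux [Vy D]]]]]].
  exists U; repeat split; auto. intros Uy; exact (D y Uy Vy).
Qed.

(* In a T1 space the complement of a point is open: it is the union of the
   open sets missing that point. *)
Lemma point_complement_open {X} (T : topology X) (x0 : X) :
  T1_space T -> is_open T (fun x => x <> x0).
Proof.
  intros H1.
  apply (open_ext T (fun x => exists U, (is_open T U /\ ~ U x0) /\ U x)).
  - apply open_union. intros U [HU _]; exact HU.
  - intros x; split.
    + intros [U [[_ nU] Ux]] ->. exact (nU Ux).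
    + intros n. destruct (H1 x x0 n) as [U [HU [Ux nU]]]. exists U; auto.
Qed.

Lemma cylinder_fst_open {X Y} (TX : topology X) (TY : topology Y) (U : X -> Prop) :
  is_open TX U -> is_open (prod_topology TX TY) (fun p => U (fst p)).
Proof.
  intros HU p Up. exists U, (fun _ => True).
  repeat split; auto. apply open_full.
Qed.

Lemma cylinder_snd_open {X Y} (TX : topology X) (TY : topology Y) (V : Y -> Prop) :
  is_open TY V -> is_open (prod_topology TX TY) (fun p => V (snd p)).
Proof.
  intros HV p Vp. exists (fun _ => True), V.
  repeat split; auto. apply open_full.
Qed.

Lemma punctured_union_open {X Y} (TX : topology X) (TY : topology Y)
  (x : X) (W : X * Y -> Prop) :
  T1_space TX -> is_open (prod_topology TX TY) W ->
  is_open (prod_topology TX TY) (fun p => fst p <> x \/ W p).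
Proof.
  intros HX HW p [Hp | Hp].
  - destruct (HX (fst p) x Hp) as [U [HU [Up nUx]]].
    destruct (cylinder_fst_open TX TY U HU p Up) as [U' [V' [H1 [H2 [H3 [H4 H5]]]]]].
    exists U', V'. repeat split; auto.
    intros a b Ua Vb. left. simpl. intros ->. exact (nUx (H5 x b Ua Vb)).
  - destruct (HW p Hp) as [U [V [HU [HV [Up [Vp HUV]]]]]].
    exists U, V. repeat split; auto.
Qed.

Lemma graph_closed {X Y} (TX : topology X) (TY : topology Y) (f : X -> Y) :
  hausdorff TY -> continuous TX TY f ->
  is_closed (prod_topology TX TY) (fun p => snd p = f (fst p)).
Proof.
  intros HY Hf [x y] Hxy. simpl in Hxy.
  destruct (HY y (f x) Hxy) as [U [V [HU [HV [Uy [Vfx D]]]]]].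
  exists (fun x' => V (f x')), U. repeat split; auto.
  intros a b Va Ub E. simpl in E. subst b. exact (D _ Ub Va).
Qed.

Lemma F_G_open {X Y} (TX : topology X) (TY : topology Y) (G : X * Y -> Prop) :
  is_open (prod_topology TX TY) G -> is_open (graph_topology TX TY) (F_G TX TY G).
Proof.
  intros HG f Hf. exists G. repeat split; auto.
Qed.

Lemma graph_meets_open {X Y} (TX : topology X) (TY : topology Y) (V : X * Y -> Prop) :
  T1_space TX -> is_open (prod_topology TX TY) V ->
  is_open (graph_topology TX TY) (fun g => exists x, V (x, proj1_sig g x)).
Proof.
  intros HX HV g [x Vx].
  exists (fun p => fst p <> x \/ V p). split; [apply punctured_union_open; auto |].
  split.
  - intros x'. destruct (classic (x' = x)) as [-> | n]; [right | left]; auto.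
  - intros h Hh. exists x. destruct (Hh x) as [H | H]; simpl in H; [congruence | auto].
Qed.

Lemma Cmap_ext {X Y} (TX : topology X) (TY : topology Y) (f g : Cmap TX TY) :
  (forall x, proj1_sig f x = proj1_sig g x) -> f = g.
Proof.
  destruct f as [f pf], g as [g pg]; simpl. intros E.
  assert (f = g) as <- by (apply functional_extensionality; exact E).
  f_equal. apply proof_irrelevance.
Qed.

Lemma graph_topology_T1 {X Y} (TX : topology X) (TY : topology Y) :
  T1_space TX -> T1_space TY -> T1_space (graph_topology TX TY).
Proof.
  intros HX HY f g nfg.
  assert (exists x0, proj1_sig f x0 <> proj1_sig g x0) as [x0 Hx0].
  { apply NNPP; intros C. apply nfg, Cmap_ext. intros x.
    apply NNPP; intros C'. apply C. exists x; exact C'. }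
  set (W := fun p : X * Y => fst p <> x0 \/ snd p <> proj1_sig g x0).
  assert (HW : is_open (prod_topology TX TY) W).
  { apply punctured_union_open; auto.
    apply (cylinder_snd_open TX TY (fun y => y <> proj1_sig g x0)).
    apply point_complement_open, HY. }
  exists (F_G TX TY W). repeat split.
  - apply F_G_open, HW.
  - intros x. unfold W; simpl.
    destruct (classic (x = x0)) as [-> | n]; [right | left]; auto.
  - intros Hg. destruct (Hg x0) as [H | H]; simpl in H; auto.
Qed.

Lemma separate_from_basic_complement {X Y} (TX : topology X) (TY : topology Y)
  (G : X * Y -> Prop) (f : Cmap TX TY) :
  T1_space TX -> hausdorff TY -> normal_space (prod_topology TX TY) ->
  is_open (prod_topology TX TY) G -> F_G TX TY G f ->
  exists U V, is_open (graph_topology TX TY) U /\ is_open (graph_topology TX TY) V /\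
    U f /\ (forall g, ~ F_G TX TY G g -> V g) /\ (forall g, U g -> V g -> False).
Proof.
  intros HX HY [_ HN] HG fG.
  destruct (HN (fun p => snd p = proj1_sig f (fst p)) (fun p => ~ G p))
    as [U [V [HU [HV [graphU [outV D]]]]]].
  - apply graph_closed; [exact HY | exact (proj2_sig f)].
  - apply complement_open_closed, HG.
  - intros [x y] E nG. simpl in E. subst y. exact (nG (fG x)).
  - exists (F_G TX TY U), (fun g => exists x, V (x, proj1_sig g x)).
    repeat split.
    + apply F_G_open, HU.
    + apply graph_meets_open; assumption.
    + intros x. apply graphU. reflexivity.
    + intros g ngG. apply NNPP; intros C. apply ngG. intros x.
      apply NNPP; intros nG. apply C. exists x. apply outV, nG.
    + intros g Ug [x Vx]. exact (D _ (Ug x) Vx).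
Qed.

Theorem mainTheorem1 (X Y : Type) (TX : topology X) (TY : topology Y) :
  hausdorff TX -> hausdorff TY -> normal_space (prod_topology TX TY) ->
  regular_space (graph_topology TX TY).
Proof.
  intros HX HY HN.
  pose proof (hausdorff_T1 TX HX) as HX1.
  split; [apply graph_topology_T1; [exact HX1 | apply hausdorff_T1, HY] |].
  intros A f HA nAf.
  destruct (HA f nAf) as [G [HG [fG GnA]]].
  destruct (separate_from_basic_complement TX TY G f HX1 HY HN HG fG)
    as [U [V [HU [HV [Uf [outV D]]]]]].
  exists U, V. repeat split; auto.
  intros g Ag. apply outV. intros gG. exact (GnA g gG Ag).
Qed.
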